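(* For every $n\equiv 2\pmod 4$ with $n\ge 6$, there exists a Heffter array $H(n;5)$.
   Context: A Heffter array $H(n;k)$ is an $n\times n$ array in which some cells are filled with nonzero integers and the others are empty, such that: each row and each column contains exactly $k$ filled cells; the entries of every row and of every column sum to $0$ modulo $2nk+1$; and for each integer $1\le x\le nk$, exactly one of $x$ or $-x$ appears in the array, and it appears exactly once. *)

From HB Require Import structures.
From mathcomp Require Import all_boot all_order all_algebra.
Set Implicit Arguments. Unset Strict Implicit. Unset Printing Implicit Defensive.
Import Order.TTheory GRing.Theory Num.Theory.

Definition parray (n : nat) := 'I_n -> 'I_n -> option int.

Definition cellv (c : option int) : int := if c is Some v then v else 0%R.

Definition filled (c : option int) : bool := c != None.

Definition is_heffter (n k : nat) (A : parray n) : Prop :=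
  (forall i : 'I_n, #|[set j : 'I_n | filled (A i j)]| = k) /\
  (forall j : 'I_n, #|[set i : 'I_n | filled (A i j)]| = k) /\
  (forall i j : 'I_n, forall v : int, A i j = Some v -> v != 0%R) /\
  (forall i : 'I_n, ((Posz (2 * n * k).+1) %| (\sum_(j < n) cellv (A i j))%R)%Z) /\
  (forall j : 'I_n, ((Posz (2 * n * k).+1) %| (\sum_(i < n) cellv (A i j))%R)%Z) /\
  (forall x : nat, 1 <= x <= n * k ->
     #|[set p : 'I_n * 'I_n |
        (A p.1 p.2 == Some (Posz x)) || (A p.1 p.2 == Some (- Posz x)%R)]| = 1) /\
  (forall i j : 'I_n, forall v : int, A i j = Some v ->
     (1 <= `|v|%N <= n * k)%N).
Arguments is_heffter n k A : clear implicits.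

From mathcomp Require Import all_boot all_algebra zify.

Set Implicit Arguments.
Unset Strict Implicit.
Unset Printing Implicit Defensive.

(* Write n = 2h and read the n x n array as an h x h array of 2 x 2 blocks,
   the cell i standing for position (i./2, odd i) of block row i./2.  Block
   (I, J) is filled iff J - I is 0, 1 or 2 modulo h, the diagonal blocks being
   themselves diagonal; so every row and column has 1 + 2 + 2 = 5 cells.  The
   entries are linear in the block index, with eight families of absolute
   values covering the consecutive intervals of length h or 2h that partition
   [1, 10h]; as there are only 10h filled cells, every absolute value occurs
   exactly once.  Along every row and column the block indices cancel, leaving
   the sum 0 (even positions) or -(20h + 1) (odd positions). *)

Lemma big_ord_support (R : Type) (idx : R) (op : Monoid.com_law idx) (n : nat)
    (F : nat -> R) (s : seq nat) :
    uniq s -> all (fun j => j < n) s -> (forall j, j < n -> j \notin s -> F j = idx) ->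
  \big[op/idx]_(j < n) F j = \big[op/idx]_(j <- s) F j.
Proof.
move=> s_uniq s_lt F_idx.
rewrite -(big_mkord xpredT) (bigID (mem s)) /=.
have -> : \big[op/idx]_(0 <= j < n | j \notin s) F j = idx.
  apply: big1_seq => j /andP[j_s]; rewrite mem_iota subn0 add0n => /andP[_ ltjn].
  exact: F_idx ltjn j_s.
rewrite Monoid.mulm1 -big_filter; apply/perm_big/uniq_perm; rewrite ?filter_uniq ?iota_uniq //.
move=> j; rewrite mem_filter mem_iota subn0 add0n /=.
by case j_s: (j \in s) => //=; apply: (allP s_lt).
Qed.

Lemma onto_card_inj_in (T : finType) (S : {set T}) (f : T -> nat) (m : nat) :
    #|S| <= m -> (forall x, 0 < x <= m -> exists2 p, p \in S & f p = x) ->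
  {in S &, injective f}.
Proof.
move=> card_S f_onto.
pose g p : 'I_m.+1 := inord (f p).
have g_onto : [set~ ord0] \subset g @: S.
  apply/subsetP=> y; rewrite !inE -lt0n => y_gt0.
  have /f_onto[p Sp fp] : 0 < y <= m by rewrite y_gt0 -ltnS /=.
  by apply/imsetP; exists p; rewrite // /g fp inord_val.
have /imset_injP g_inj : #|g @: S| == #|S|.
  rewrite eqn_leq leq_imset_card (leq_trans card_S) //.
  by move: (subset_leq_card g_onto); rewrite cardsC1 card_ord.
by move=> p q Sp Sq fpq; apply: g_inj; rewrite // /g fpq.
Qed.

Lemma card_filled_cells n k (A : parray n) :
    (forall i, #|[set j | filled (A i j)]| = k) ->
  #|[set p : 'I_n * 'I_n | filled (A p.1 p.2)]| = n * k.
Proof.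
move=> row_card; rewrite -sum1_card big_mkcond /=.
under eq_bigr do rewrite inE.
rewrite -(pair_bigA _ (fun i j => if filled (A i j) then 1 else 0)) /=.
rewrite (eq_bigr (fun=> k)) => [|i _]; first by rewrite sum_nat_const card_ord.
by rewrite -(row_card i) -sum1_card [RHS]big_mkcond; apply: eq_bigr => j _; rewrite inE.
Qed.

Ltac case_ifs := repeat match goal with
  | |- context [if ?b then _ else _] => let E := fresh "E" in case E: b
  | H : context [if ?b then _ else _] |- _ => let E := fresh "E" in case E: b in H
  end.

Definition pack (b : bool) (x : nat) : nat := b + x.*2.

Lemma pack_half b x : (pack b x)./2 = x. Proof. exact: half_bit_double. Qed.
Lemma pack_odd b x : odd (pack b x) = b.
Proof. by rewrite /pack oddD odd_double addbF; case: b. Qed.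
Lemma pack_odd_half i : pack (odd i) i./2 = i. Proof. exact: odd_double_half. Qed.

Lemma some_abs_eq (c : option int) (x : nat) :
  (c == Some (Posz x)) || (c == Some (- Posz x)%R) = filled c && (`|cellv c|%N == x).
Proof. by case: c => [v|] //=; rewrite !(inj_eq (@Some_inj _)); apply/idP/idP; lia. Qed.

Section Construction.

Variable h : nat.
Hypothesis h_gt2 : 2 < h.

(* Cyclic arithmetic on [0, h), for arguments already in range. *)
Definition cdiff (I J : nat) : nat := if I <= J then J - I else J + h - I.
Definition cadd (I d : nat) : nat := if I + d < h then I + d else I + d - h.
Definition csub (J d : nat) : nat := if d <= J then J - d else J + h - d.

Lemma cadd_lt I d : I < h -> d < h -> cadd I d < h.
Proof. rewrite /cadd; case_ifs; lia. Qed.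
Lemma csub_lt J d : J < h -> d < h -> csub J d < h.
Proof. rewrite /csub; case_ifs; lia. Qed.

(* [entry0 I r], [entry1 I r c] and [entry2 J r c] are the entries at position
   (r, c) of the blocks (I, I), (I, I + 1) and (J - 2, J). *)
Definition entry0 (I : nat) (r : bool) : int :=
  if r then (Posz (5 * h) - Posz I)%R else Posz (6 * h + 1 + I).

Definition entry1 (I : nat) (r c : bool) : int :=
  match r, c with
  | false, false => (- Posz (2 + 2 * I))%R
  | false, true => (Posz I - Posz (6 * h))%R
  | true, false => Posz (1 + 2 * I)
  | true, true => (- Posz (7 * h + 1 + I))%R
  end.

Definition entry2 (J : nat) (r c : bool) : int :=
  match r, c with
  | false, false => (Posz (4 * h) - Posz (2 * J))%R
  | false, true => (Posz (1 + 2 * J) - Posz (4 * h))%R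
  | true, false => (Posz J - Posz (10 * h))%R
  | true, true => (- Posz (8 * h + 1 + J))%R
  end.

Definition block_entry (I J : nat) (r c : bool) : option int :=
  let D := cdiff I J in
  if D == 0 then (if r == c then Some (entry0 I r) else None)
  else if D == 1 then Some (entry1 I r c)
  else if D == 2 then Some (entry2 J r c)
  else None.

Definition heffter_array : parray h.*2 :=
  fun i j => block_entry i./2 j./2 (odd i) (odd j).

Lemma cdiff_cadd I d : I < h -> d < h -> cdiff I (cadd I d) = d.
Proof. rewrite /cdiff /cadd; case_ifs; lia. Qed.

Lemma cdiff_csub J d : J < h -> d < h -> cdiff (csub J d) J = d.
Proof. rewrite /cdiff /csub; case_ifs; lia. Qed.

Lemma block_entry_diag0 I r : block_entry I I r r = Some (entry0 I r).
Proof. by rewrite /block_entry /cdiff leqnn subnn /= eqxx. Qed.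

Lemma block_entry_diag1 I r c : I < h -> block_entry I (cadd I 1) r c = Some (entry1 I r c).
Proof. by move=> ltIh; rewrite /block_entry (cdiff_cadd ltIh (ltnW h_gt2)). Qed.

Lemma block_entry_diag2 I r c :
  I < h -> block_entry I (cadd I 2) r c = Some (entry2 (cadd I 2) r c).
Proof. by move=> ltIh; rewrite /block_entry (cdiff_cadd ltIh h_gt2). Qed.

Lemma block_entry_codiag1 J r c :
  J < h -> block_entry (csub J 1) J r c = Some (entry1 (csub J 1) r c).
Proof. by move=> ltJh; rewrite /block_entry (cdiff_csub ltJh (ltnW h_gt2)). Qed.

Lemma block_entry_codiag2 J r c : J < h -> block_entry (csub J 2) J r c = Some (entry2 J r c).
Proof. by move=> ltJh; rewrite /block_entry (cdiff_csub ltJh h_gt2). Qed.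

Definition row_support (I : nat) (r : bool) : seq nat :=
  [:: pack r I; pack false (cadd I 1); pack true (cadd I 1);
      pack false (cadd I 2); pack true (cadd I 2)].

Definition col_support (J : nat) (c : bool) : seq nat :=
  [:: pack c J; pack false (csub J 1); pack true (csub J 1);
      pack false (csub J 2); pack true (csub J 2)].

Lemma row_support_uniq I r : I < h -> uniq (row_support I r).
Proof. by move=> ltIh; rewrite /row_support /cadd /pack /= !inE; case: r; case_ifs; lia. Qed.

Lemma col_support_uniq J c : J < h -> uniq (col_support J c).
Proof. by move=> ltJh; rewrite /col_support /csub /pack /= !inE; case: c; case_ifs; lia. Qed.

Lemma row_support_lt I r : I < h -> all (fun j => j < h.*2) (row_support I r).
Proof. by move=> ltIh; rewrite /row_support /cadd /pack /=; case: r; case_ifs; lia. Qed.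

Lemma col_support_lt J c : J < h -> all (fun i => i < h.*2) (col_support J c).
Proof. by move=> ltJh; rewrite /col_support /csub /pack /=; case: c; case_ifs; lia. Qed.

Lemma block_entry_row_support I J r c :
  I < h -> J < h -> filled (block_entry I J r c) -> pack c J \in row_support I r.
Proof.
move=> ltIh ltJh; rewrite /filled /block_entry /cdiff /row_support /cadd /pack !inE.
by case: r; case: c => /=; case_ifs => //; lia.
Qed.

Lemma block_entry_col_support I J r c :
  I < h -> J < h -> filled (block_entry I J r c) -> pack r I \in col_support J c.
Proof.
move=> ltIh ltJh; rewrite /filled /block_entry /cdiff /col_support /csub /pack !inE.
by case: r; case: c => /=; case_ifs => //; lia.
Qed.

Definition row_entries (I : nat) (r : bool) : seq (option int) :=
  [:: Some (entry0 I r); Some (entry1 I r false); Some (entry1 I r true);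
      Some (entry2 (cadd I 2) r false); Some (entry2 (cadd I 2) r true)].

Definition col_entries (J : nat) (c : bool) : seq (option int) :=
  [:: Some (entry0 J c); Some (entry1 (csub J 1) false c); Some (entry1 (csub J 1) true c);
      Some (entry2 J false c); Some (entry2 J true c)].

Lemma row_support_entries I r : I < h ->
  [seq block_entry I j./2 r (odd j) | j <- row_support I r] = row_entries I r.
Proof.
move=> ltIh; rewrite /row_support !map_cons !pack_half !pack_odd block_entry_diag0.
by rewrite !block_entry_diag1 ?block_entry_diag2.
Qed.

Lemma col_support_entries J c : J < h ->
  [seq block_entry i./2 J (odd i) c | i <- col_support J c] = col_entries J c.
Proof.
move=> ltJh; rewrite /col_support !map_cons !pack_half !pack_odd block_entry_diag0.
by rewrite !block_entry_codiag1 ?block_entry_codiag2.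
Qed.

Lemma row_big (R : Type) (idx : R) (op : Monoid.com_law idx) (phi : option int -> R) I r :
  phi None = idx -> I < h ->
  \big[op/idx]_(j < h.*2) phi (block_entry I j./2 r (odd j)) =
  \big[op/idx]_(e <- row_entries I r) phi e.
Proof.
move=> phi_None ltIh; rewrite -row_support_entries // big_map.
apply: big_ord_support; rewrite ?row_support_uniq ?row_support_lt //.
move=> j; rewrite -ltn_half_double => ltjh j_out.
case E: (block_entry _ _ _ _) => [v|] //.
have := @block_entry_row_support I j./2 r (odd j) ltIh ltjh.
by rewrite E pack_odd_half (negbTE j_out) => /(_ isT).
Qed.

Lemma col_big (R : Type) (idx : R) (op : Monoid.com_law idx) (phi : option int -> R) J c :
  phi None = idx -> J < h ->
  \big[op/idx]_(i < h.*2) phi (block_entry i./2 J (odd i) c) =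
  \big[op/idx]_(e <- col_entries J c) phi e.
Proof.
move=> phi_None ltJh; rewrite -col_support_entries // big_map.
apply: big_ord_support; rewrite ?col_support_uniq ?col_support_lt //.
move=> i; rewrite -ltn_half_double => ltih i_out.
case E: (block_entry _ _ _ _) => [v|] //.
have := @block_entry_col_support i./2 J (odd i) c ltih ltJh.
by rewrite E pack_odd_half (negbTE i_out) => /(_ isT).
Qed.

Lemma row_entries_sum I r :
  (\sum_(e <- row_entries I r) cellv e)%R = if r then (- Posz (20 * h + 1))%R else 0%R.
Proof. by rewrite !big_cons big_nil /= /entry0 /entry1 /entry2; case: r; lia. Qed.

Lemma col_entries_sum J c :
  (\sum_(e <- col_entries J c) cellv e)%R = if c then (- Posz (20 * h + 1))%R else 0%R.
Proof. by rewrite !big_cons big_nil /= /entry0 /entry1 /entry2; case: c; lia. Qed.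

Lemma block_entry_abs_range I J r c v :
  I < h -> J < h -> block_entry I J r c = Some v -> 0 < `|v|%N <= 10 * h.
Proof.
move=> ltIh ltJh; rewrite /block_entry /cdiff.
by case: r; case: c => /=; case_ifs => //= -[<-]; rewrite /entry0 /entry1 /entry2; lia.
Qed.

Lemma entry0_abs_cover x :
  4 * h < x <= 5 * h \/ 6 * h < x <= 7 * h -> exists I r, I < h /\ `|entry0 I r|%N = x.
Proof.
by case=> x_range; [exists (5 * h - x), true | exists (x - 6 * h - 1), false];
  rewrite /entry0; lia.
Qed.

Lemma entry1_abs_cover x :
    0 < x <= 2 * h \/ 5 * h < x <= 6 * h \/ 7 * h < x <= 8 * h ->
  exists I r c, I < h /\ `|entry1 I r c|%N = x.
Proof.
case=> [x_range|[x_range|x_range]].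
- move: (odd_double_half x); case: (odd x) => /= x_eq.
    by exists x./2, true, false; rewrite /entry1; lia.
  by exists x./2.-1, false, false; rewrite /entry1; lia.
- by exists (6 * h - x), false, true; rewrite /entry1; lia.
- by exists (x - 7 * h - 1), true, true; rewrite /entry1; lia.
Qed.

Lemma entry2_abs_cover x :
    2 * h < x <= 4 * h \/ 8 * h < x <= 9 * h \/ 9 * h < x <= 10 * h ->
  exists J r c, J < h /\ `|entry2 J r c|%N = x.
Proof.
case=> [x_range|[x_range|x_range]].
- move: (odd_double_half x); case: (odd x) => /= x_eq.
    by exists (2 * h - 1 - x./2), false, true; rewrite /entry2; lia.
  by exists (2 * h - x./2), false, false; rewrite /entry2; lia.
- by exists (x - 8 * h - 1), true, true; rewrite /entry2; lia.
- by exists (10 * h - x), true, false; rewrite /entry2; lia.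
Qed.

Lemma block_entry_abs_cover x : 0 < x <= 10 * h ->
  exists I J r c, [/\ I < h, J < h & omap absz (block_entry I J r c) = Some x].
Proof.
move=> x_range.
have [/entry0_abs_cover|[/entry1_abs_cover|/entry2_abs_cover]] :
    (4 * h < x <= 5 * h \/ 6 * h < x <= 7 * h) \/
    (0 < x <= 2 * h \/ 5 * h < x <= 6 * h \/ 7 * h < x <= 8 * h) \/
    (2 * h < x <= 4 * h \/ 8 * h < x <= 9 * h \/ 9 * h < x <= 10 * h) by lia.
- move=> [I [r [ltIh <-]]].
  by exists I, I, r, r; rewrite block_entry_diag0.
- move=> [I [r [c [ltIh <-]]]].
  exists I, (cadd I 1), r, c; split=> //; last by rewrite block_entry_diag1.
  exact: cadd_lt (ltnW h_gt2).
- move=> [J [r [c [ltJh <-]]]].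
  exists (csub J 2), J, r, c; split=> //; last by rewrite block_entry_codiag2.
  exact: csub_lt h_gt2.
Qed.

Lemma half_ord_lt (i : 'I_h.*2) : i./2 < h.
Proof. by rewrite ltn_half_double. Qed.

Lemma pack_ord_lt b I : I < h -> pack b I < h.*2.
Proof. by rewrite -ltn_half_double pack_half. Qed.

Lemma heffter_row_card i : #|[set j | filled (heffter_array i j)]| = 5.
Proof.
rewrite -sum1_card big_mkcond /=; under eq_bigr do rewrite inE.
rewrite (@row_big _ _ _ (fun e => if filled e then 1 else 0)) ?half_ord_lt //.
by rewrite !big_cons big_nil.
Qed.

Lemma heffter_col_card j : #|[set i | filled (heffter_array i j)]| = 5.
Proof.
rewrite -sum1_card big_mkcond /=; under eq_bigr do rewrite inE.
rewrite (@col_big _ _ _ (fun e => if filled e then 1 else 0)) ?half_ord_lt //.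
by rewrite !big_cons big_nil.
Qed.

Lemma heffter_row_sum i :
  (Posz (2 * h.*2 * 5).+1 %| (\sum_(j < h.*2) cellv (heffter_array i j))%R)%Z.
Proof.
rewrite (@row_big _ _ _ cellv) ?half_ord_lt // row_entries_sum.
have -> : (2 * h.*2 * 5).+1 = 20 * h + 1 by lia.
by case: (odd i); rewrite dvdzE ?abszN ?dvdnn ?dvdn0.
Qed.

Lemma heffter_col_sum j :
  (Posz (2 * h.*2 * 5).+1 %| (\sum_(i < h.*2) cellv (heffter_array i j))%R)%Z.
Proof.
rewrite (@col_big _ _ _ cellv) ?half_ord_lt // col_entries_sum.
have -> : (2 * h.*2 * 5).+1 = 20 * h + 1 by lia.
by case: (odd j); rewrite dvdzE ?abszN ?dvdnn ?dvdn0.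
Qed.

Lemma heffter_abs_range i j v : heffter_array i j = Some v -> 0 < `|v|%N <= h.*2 * 5.
Proof. by move/block_entry_abs_range; rewrite !half_ord_lt => /(_ isT isT); lia. Qed.

Lemma heffter_abs_once x : 0 < x <= h.*2 * 5 ->
  #|[set p : 'I_h.*2 * 'I_h.*2 | (heffter_array p.1 p.2 == Some (Posz x))
                                || (heffter_array p.1 p.2 == Some (- Posz x)%R)]| = 1.
Proof.
set S := [set p : 'I_h.*2 * 'I_h.*2 | filled (heffter_array p.1 p.2)].
pose f p := `|cellv (heffter_array p.1 p.2)|%N.
have f_onto y : 0 < y <= h.*2 * 5 -> exists2 p, p \in S & f p = y.
  rewrite (_ : h.*2 * 5 = 10 * h); last by lia.
  case/block_entry_abs_cover=> I [J [r [c [ltIh ltJh hit]]]].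
  exists (Ordinal (pack_ord_lt r ltIh), Ordinal (pack_ord_lt c ltJh));
    rewrite ?inE /f /heffter_array /= !pack_half !pack_odd;
    by case: (block_entry I J r c) hit => //= v [].
have f_inj : {in S &, injective f}.
  by apply: onto_card_inj_in f_onto; rewrite (card_filled_cells heffter_row_card).
move=> /f_onto[p Sp fp]; apply/eqP/cards1P; exists p.
apply/setP=> q; rewrite !inE some_abs_eq -/(f q) -fp.
apply/idP/eqP=> [/andP[Sq /eqP fq]|->]; last by move: Sp; rewrite inE eqxx andbT.
by apply: f_inj; rewrite // inE.
Qed.

Theorem heffter_array_is_heffter : is_heffter h.*2 5 heffter_array.
Proof.
do !split.
- exact: heffter_row_card.
- exact: heffter_col_card.
- by move=> i j v /heffter_abs_range/andP[]; rewrite absz_gt0.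
- exact: heffter_row_sum.
- exact: heffter_col_sum.
- exact: heffter_abs_once.
- exact: heffter_abs_range.
Qed.

End Construction.

Theorem lemma7p1 (n : nat) :
  6 <= n -> n %% 4 = 2 -> exists A : parray n, is_heffter n 5 A.
Proof.
(* The construction works for every even n >= 6: [n %% 4 = 2] only serves to make n even. *)
move=> n_ge6 n_mod4.
have -> : n = (n./2).*2 by lia.
exists (@heffter_array n./2); apply: heffter_array_is_heffter; lia.
Qed.
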